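(* Let $n\ge 1$ and let $a_1,\dots,a_n>0$. Then, as formal power series in $z$ (with coefficients polynomials in $t$), \[ \Theta_n(z,t)=\prod_{m=1}^{n}\Big(1+\frac{a_m z}{1-a_m z t}\Big) =\exp\Big(\sum_{j=1}^{\infty}\frac{z^j}{j}\,A_n(j)\,\big(t^j-(t-1)^j\big)\Big). \] Moreover, if $t\neq 0$ and $a_1,\dots,a_n$ are pairwise distinct, then, as an identity of rational functions in $z$, \[ \Theta_n(z,t)=\frac{(t-1)^n}{t^n}+(-1)^n\sum_{j=1}^{n}\frac{\prod_{m=1}^{n}\big(\frac{1-t}{a_j t}+\frac1{a_m}\big)}{\prod_{\ell=1,\ell\ne j}^{n}\big(\frac1{a_j}-\frac1{a_\ell}\big)}\cdot\frac{1}{zt-\frac1{a_j}}. \]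
   Context: Let $\boldsymbol a=(a_j)_{j\ge1}$ be a sequence of positive reals. For integers $n\ge1$, $k\ge0$ let $\mathcal M_{n,k}=\{(\ell_1,\dots,\ell_k)\in\mathbb N^k: n\ge\ell_1\ge\ell_2\ge\cdots\ge\ell_k\ge1\}$ (the $k$-multisets of $\{1,\dots,n\}$ written as non-increasing sequences). For $\vec\ell\in\mathcal M_{n,k}$ let $\sigma(\vec\ell)=|\{1\le j\le k-1:\ell_j=\ell_{j+1}\}|$ and $w(\vec\ell)=\prod_{j=1}^k a_{\ell_j}$. Define the polynomial $\theta_{n;k}(t)=\sum_{\vec\ell\in\mathcal M_{n,k}}w(\vec\ell)\,t^{\sigma(\vec\ell)}$ (with $\theta_{n;0}(t)=1$), the generating function $\Theta_n(z,t)=\sum_{k\ge0}\theta_{n;k}(t)z^k$, and the power sums $A_n(j)=\sum_{m=1}^n a_m^j$. *)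

From HB Require Import structures.
From mathcomp Require Import all_boot all_order all_algebra.
Set Implicit Arguments. Unset Strict Implicit. Unset Printing Implicit Defensive.
Import Order.TTheory GRing.Theory Num.Theory.
Local Open Scope ring_scope.

Definition fps (A : Type) := nat -> A.

Section FPS.
Variable A : nzRingType.

Definition fps_const (c : A) : fps A := fun k => if k == 0%N then c else 0.
Definition fps_one : fps A := fps_const 1.
Definition fps_lin (c0 c1 : A) : fps A :=
  fun k => if k == 0%N then c0 else if k == 1%N then c1 else 0.
Definition fps_add (f g : fps A) : fps A := fun k => f k + g k.
Definition fps_scale (c : A) (f : fps A) : fps A := fun k => c * f k.
Definition fps_mul (f g : fps A) : fps A :=
  fun k => \sum_(i < k.+1) f i * g (k - i)%N.
Definition fps_pow (f : fps A) (e : nat) : fps A := iter e (fps_mul f) fps_one.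
Definition fps_prod (s : seq (fps A)) : fps A := foldr fps_mul fps_one s.
End FPS.

Section FPSInv.
Variable A : unitRingType.
(* multiplicative inverse of a power series whose constant term is a unit:
   b_0 = f_0^-1,  b_k = - f_0^-1 * sum_{i=1}^k f_i b_{k-i} *)
Fixpoint fps_inv_seq (f : fps A) (k : nat) : seq A :=
  match k with
  | 0 => [:: (f 0%N)^-1]
  | k'.+1 => let s := fps_inv_seq f k' in
      rcons s (- (f 0%N)^-1 * \sum_(i < k'.+1) f i.+1 * nth 0 s (k' - i)%N)
  end.
Definition fps_inv (f : fps A) : fps A := fun k => nth 0 (fps_inv_seq f k) k.
End FPSInv.

Section FPSExp.
Variable F : fieldType.
Variable A : lalgType F.
(* exp of a power series g with g_0 = 0 : sum_e g^e / e! (coefficient k only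
   involves e <= k) *)
Definition fps_exp (g : fps A) : fps A :=
  fun k => \sum_(e < k.+1) ((e`!)%:R^-1 : F) *: fps_pow g e k.
End FPSExp.

Section Theta.
Variable R : realFieldType.
Variable a : nat -> R.   (* a_j for j >= 1; a 0 is unused *)

(* l : k.-tuple 'I_n encodes (l_1,...,l_k) with l_j = val (l j) + 1 *)
Definition noninc {n : nat} (s : seq 'I_n) : bool :=
  sorted (fun x y : 'I_n => (y <= x)%N) s.

Definition sigma {n k : nat} (l : k.-tuple 'I_n) : nat :=
  let s := map (@nat_of_ord n) l in
  \sum_(j < k.-1) ((nth 0%N s j == nth 0%N s j.+1) : nat).

Definition weight {n k : nat} (l : k.-tuple 'I_n) : R :=
  \prod_(i <- l) a (val i).+1.

Definition theta (n k : nat) : {poly R} :=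
  \sum_(l : k.-tuple 'I_n | noninc l) (weight l *: 'X^(sigma l)).

Definition Theta (n : nat) : fps {poly R} := fun k => theta n k.

Definition Apow (n j : nat) : R := \sum_(1 <= m < n.+1) a m ^+ j.
End Theta.

From HB Require Import structures.
From mathcomp Require Import all_boot all_order all_algebra.
From mathcomp Require Import zify ring.
From Stdlib Require Import FunctionalExtensionality.
Import Order.TTheory GRing.Theory Num.Theory.
Local Open Scope ring_scope.
Set Implicit Arguments. Unset Strict Implicit. Unset Printing Implicit Defensive.

(* The proof has four parts.
   1. The Cauchy product is computed through polynomial truncations, which
      transfers the commutative ring laws of {poly A} to series.
   2. A series F with F_0 = 1 "solves" z F' = h F.  Solutions of such
      equations multiply when the h add up, exp g solves z F' = (z g') F,
      and over a Q-algebra solutions are unique.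
   3. Sorting sequences by their first letter shows that the generating
      function of the sequences with values in {1, ..., v} is multiplied by
      P(a_(v+1)) when v increases, where P(c) = 1 + c z/(1 - c t z)
      = (1 - c (t - 1) z)/(1 - c t z).  This is the product formula; the
      exponential formula follows by uniqueness, since the logarithmic
      derivatives agree.
   4. At t != 0, multiplying both sides of the partial fraction formula by
      Q = prod_m (1 - a_m t z) gives two polynomials of degree <= n with the
      same coefficient of degree n and the same values at the n distinct
      points 1/(a_j t); hence they are equal and Q can be cancelled. *)

Section PowerSeriesRing.
Variable A : comNzRingType.
Implicit Types (f g h : fps A) (p q : {poly A}).

Definition fps_of_poly p : fps A := fun k => p`_k.

Definition fps_trunc k f : {poly A} := \poly_(i < k.+1) f i.

Lemma fps_truncE k f i : (i <= k)%N -> f i = (fps_trunc k f)`_i.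
Proof. by move=> hi; rewrite coef_poly ltnS hi. Qed.

(* The k-th coefficient of a product only involves the terms of degree at
   most k of the factors, hence can be computed in any polynomial ring
   approximation; this transfers the ring laws of {poly A} to series. *)
Lemma fps_mul_polyE f g p q k :
  (forall i, (i <= k)%N -> f i = p`_i) -> (forall i, (i <= k)%N -> g i = q`_i) ->
  fps_mul f g k = (p * q)`_k.
Proof.
move=> hf hg; rewrite coefM /fps_mul; apply: eq_bigr => i _.
rewrite hf ?hg //; [exact: leq_subr | by rewrite -ltnS].
Qed.

Lemma fps_mul_truncE f g k : fps_mul f g k = (fps_trunc k f * fps_trunc k g)`_k.
Proof. exact: fps_mul_polyE (@fps_truncE k f) (@fps_truncE k g). Qed.

Lemma fps_mulC f g : fps_mul f g = fps_mul g f.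
Proof. by apply: functional_extensionality => k; rewrite !fps_mul_truncE mulrC. Qed.

Lemma fps_mulA f g h : fps_mul f (fps_mul g h) = fps_mul (fps_mul f g) h.
Proof.
apply: functional_extensionality => k.
have truncM u v i : (i <= k)%N -> fps_mul u v i = (fps_trunc k u * fps_trunc k v)`_i.
  move=> hi; apply: fps_mul_polyE => j hj; apply: fps_truncE; exact: leq_trans hj hi.
rewrite (fps_mul_polyE (@fps_truncE k f) (truncM g h)).
by rewrite (fps_mul_polyE (truncM f g) (@fps_truncE k h)) mulrA.
Qed.

Lemma fps_mulDl f g h :
  fps_mul (fps_add f g) h = fps_add (fps_mul f h) (fps_mul g h).
Proof.
apply: functional_extensionality => k; rewrite /fps_mul /fps_add -big_split /=.
by apply: eq_bigr => i _; rewrite mulrDl.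
Qed.

Lemma fps_mul_coef0 f g : fps_mul f g 0%N = f 0%N * g 0%N.
Proof. by rewrite /fps_mul big_ord1. Qed.

Lemma fps_of_polyM p q : fps_mul (fps_of_poly p) (fps_of_poly q) = fps_of_poly (p * q).
Proof. by apply: functional_extensionality => k; rewrite /fps_of_poly coefM. Qed.

Lemma fps_of_poly1 : fps_of_poly 1 = fps_one A.
Proof.
apply: functional_extensionality => k.
by rewrite /fps_of_poly coef1 /fps_one /fps_const; case: (k == 0%N).
Qed.

Lemma fps_mul1l f : fps_mul (fps_one A) f = f.
Proof.
apply: functional_extensionality => k; rewrite -fps_of_poly1.
by rewrite (fps_mul_polyE (p := 1) (fun i _ => erefl) (@fps_truncE k f)) mul1r -fps_truncE.
Qed.

Lemma fps_mul1r f : fps_mul f (fps_one A) = f.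
Proof. by rewrite fps_mulC fps_mul1l. Qed.

Lemma fps_mul_scaler c f g : fps_mul f (fps_scale c g) = fps_scale c (fps_mul f g).
Proof.
apply: functional_extensionality => k; rewrite /fps_mul /fps_scale mulr_sumr.
by apply: eq_bigr => i _; rewrite mulrCA.
Qed.

Lemma fps_mul_scalel c f g : fps_mul (fps_scale c f) g = fps_scale c (fps_mul f g).
Proof. by rewrite fps_mulC fps_mul_scaler fps_mulC. Qed.

Lemma fps_mul_constl c f : fps_mul (fps_const c) f = fps_scale c f.
Proof.
apply: functional_extensionality => k; rewrite /fps_mul big_ord_recl /= subn0.
by rewrite big1 ?addr0 // => i _; rewrite /fps_const /= mul0r.
Qed.

Lemma fps_mul_suml (I : Type) (s : seq I) (F : I -> fps A) g :
  fps_mul (fun k => \sum_(i <- s) F i k) g = (fun k => \sum_(i <- s) fps_mul (F i) g k).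
Proof.
apply: functional_extensionality => k; rewrite /fps_mul.
under eq_bigr => j _ do rewrite mulr_suml.
by rewrite exchange_big.
Qed.

Lemma fps_prod_rcons (s : seq (fps A)) f :
  fps_prod (rcons s f) = fps_mul f (fps_prod s).
Proof.
elim: s => [|g s IH] /=; first by [].
by rewrite IH fps_mulA (fps_mulC g) -fps_mulA.
Qed.

Lemma fps_prodM (I : Type) (s : seq I) (F G : I -> fps A) :
  fps_prod [seq fps_mul (F i) (G i) | i <- s] =
  fps_mul (fps_prod [seq F i | i <- s]) (fps_prod [seq G i | i <- s]).
Proof.
elim: s => [|i s IH] /=; first by rewrite fps_mul1l.
by rewrite IH !fps_mulA; congr fps_mul; rewrite -!fps_mulA (fps_mulC (G i)).
Qed.

Lemma fps_of_poly_prod (I : Type) (s : seq I) (P : I -> {poly A}) :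
  fps_prod [seq fps_of_poly (P i) | i <- s] = fps_of_poly (\prod_(i <- s) P i).
Proof.
elim: s => [|i s IH] /=; first by rewrite big_nil fps_of_poly1.
by rewrite IH fps_of_polyM big_cons.
Qed.

Lemma fps_mulIr f f' g :
  g 0%N = 1 -> (forall k, fps_mul f g k = fps_mul f' g k) -> forall k, f k = f' k.
Proof.
move=> g0 eq_fg k; elim/ltn_ind: k => k IH.
have := eq_fg k; rewrite /fps_mul !big_ord_recr /= subnn g0 !mulr1.
rewrite (eq_bigr (fun i : 'I_k => f' i * g (k - i)%N)); first by move/addrI.
by move=> [i hi] _ /=; rewrite IH.
Qed.

Definition fps_geom u : fps A := fun k => u ^+ k.
Definition fps_geom_tail u : fps A := fun k => if k == 0%N then 0 else u ^+ k.
Definition fps_linear u : fps A := fps_lin 1 (- u).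

Lemma fps_linear_poly u : fps_linear u = fps_of_poly (1 - u *: 'X).
Proof.
apply: functional_extensionality => k.
rewrite /fps_linear /fps_lin /fps_of_poly coefB coef1 coefZ coefX.
by case: k => [|[|k]] /=; rewrite ?mulr0 ?mulr1 ?subr0 ?sub0r ?subrr.
Qed.

Lemma fps_mul_linear f v k :
  fps_mul f (fps_linear v) k.+1 = f k.+1 - v * f k.
Proof.
rewrite fps_mulC /fps_mul big_ord_recl big_ord_recl big1 /=; last first.
  by move=> i _; rewrite /fps_linear /fps_lin /= mul0r.
by rewrite /fps_linear /fps_lin /= subn0 subn1 /= mul1r addr0 mulNr.
Qed.

Lemma fps_geomK u : fps_mul (fps_geom u) (fps_linear u) = fps_one A.
Proof.
apply: functional_extensionality => -[|k].
  by rewrite fps_mul_coef0 /fps_linear /fps_lin /fps_geom /= mulr1.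
by rewrite fps_mul_linear /fps_geom exprS subrr.
Qed.

End PowerSeriesRing.

Section LogarithmicDerivative.
Variable A : comNzRingType.
Implicit Types (f g h F G : fps A).

(* The Euler derivation z d/dz. *)
Definition fps_der f : fps A := fun k => k%:R * f k.

Lemma fps_derM f g :
  fps_der (fps_mul f g) = fps_add (fps_mul (fps_der f) g) (fps_mul f (fps_der g)).
Proof.
apply: functional_extensionality => k.
rewrite /fps_der /fps_mul /fps_add mulr_sumr -big_split /=.
apply: eq_bigr => [[i hi]] _ /=.
have -> : (k%:R : A) = i%:R + (k - i)%:R by rewrite -natrD subnKC // -ltnS.
by rewrite mulrDl mulrA mulrCA mulrA.
Qed.

Lemma fps_der1 : fps_der (fps_one A) = fun=> 0.
Proof.
apply: functional_extensionality => k; rewrite /fps_der /fps_one /fps_const.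
by case: (k =P 0%N) => [->|]; rewrite ?mulr0 ?mul0r.
Qed.

(* F is the solution with constant term 1 of z F' = h F, i.e. h is the
   logarithmic derivative z F'/F; this is how we recognize exponentials. *)
Definition solves_ode F h := F 0%N = 1 /\ forall k, fps_der F k = fps_mul h F k.

Lemma solves_ode1 : solves_ode (fps_one A) (fun=> 0).
Proof.
split=> // k; rewrite fps_der1 /fps_mul big1 // => i _.
by rewrite mul0r.
Qed.

Lemma solves_odeM F G h1 h2 :
  solves_ode F h1 -> solves_ode G h2 -> solves_ode (fps_mul F G) (fps_add h1 h2).
Proof.
move=> [F0 dF] [G0 dG]; split; first by rewrite fps_mul_coef0 F0 G0 mulr1.
have eF : fps_der F = fps_mul h1 F by apply: functional_extensionality.
have eG : fps_der G = fps_mul h2 G by apply: functional_extensionality.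
move=> k; rewrite fps_derM eF eG fps_mulDl -fps_mulA (fps_mulA F h2 G) (fps_mulC F h2).
by rewrite -fps_mulA.
Qed.

Lemma solves_ode_prod (I : Type) (s : seq I) (F h : I -> fps A) :
  (forall i, solves_ode (F i) (h i)) ->
  solves_ode (fps_prod [seq F i | i <- s]) (fun k => \sum_(i <- s) h i k).
Proof.
move=> solF; elim: s => [|i s IH] /=.
  have -> : (fun k => \sum_(i <- [::]) h i k) = fun=> 0 : A.
    by apply: functional_extensionality => k; rewrite big_nil.
  exact: solves_ode1.
have -> : (fun k => \sum_(j <- i :: s) h j k) =
          fps_add (h i) (fun k => \sum_(j <- s) h j k).
  by apply: functional_extensionality => k; rewrite big_cons.
exact: solves_odeM.
Qed.

Lemma solves_ode_geom u : solves_ode (fps_geom u) (fps_geom_tail u).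
Proof.
split=> [|k]; first by rewrite /fps_geom expr0.
rewrite /fps_der /fps_mul big_ord_recl /= /fps_geom_tail /= mul0r add0r.
rewrite (eq_bigr (fun _ => u ^+ k)) => [|i _]; last by rewrite /fps_geom -exprD subnKC.
by rewrite sumr_const card_ord mulr_natl.
Qed.

Lemma solves_ode_linear u : solves_ode (fps_linear u) (fun k => - fps_geom_tail u k).
Proof.
split=> // -[|k]; first by rewrite /fps_der mul0r fps_mul_coef0 /fps_geom_tail /= oppr0 mul0r.
rewrite fps_mul_linear /fps_geom_tail /fps_der /fps_linear /fps_lin /=.
case: k => [|k] /=; first by rewrite mul1r oppr0 mulr0 subr0.
by rewrite mulr0 mulrN opprK !exprS addNr.
Qed.

Lemma fps_powS g e : fps_pow g e.+1 = fps_mul g (fps_pow g e).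
Proof. by []. Qed.

Lemma fps_pow_small g e j : g 0%N = 0 -> (j < e)%N -> fps_pow g e j = 0.
Proof.
move=> g0; elim: e j => [//|e IH] j lt_je.
rewrite fps_powS /fps_mul big1 // => -[[|i] hi] _ /=; first by rewrite g0 mul0r.
by rewrite IH ?mulr0 //; lia.
Qed.

Lemma fps_der_pow g e :
  fps_der (fps_pow g e.+1) = fps_scale e.+1%:R (fps_mul (fps_der g) (fps_pow g e)).
Proof.
elim: e => [|e IH].
  rewrite fps_powS /fps_pow /= !fps_mul1r.
  by apply: functional_extensionality => k; rewrite /fps_scale mul1r.
rewrite fps_powS fps_derM IH fps_mul_scaler.
apply: functional_extensionality => k; rewrite /fps_add /fps_scale.
rewrite fps_mulA (fps_mulC g) -fps_mulA -fps_powS.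
by rewrite [in RHS]mulrSr mulrDl mul1r addrC.
Qed.

End LogarithmicDerivative.

Section Exponential.
Variables (F : numFieldType) (A : comAlgType F).
Implicit Types (g h : fps A).

Lemma fps_exp_truncE g j N : g 0%N = 0 -> (j < N)%N ->
  \sum_(e < N) ((e`!)%:R^-1 : F) *: fps_pow g e j = fps_exp g j.
Proof.
move=> g0 lt_jN; rewrite /fps_exp.
rewrite (big_ord_widen N (fun e => ((e`!)%:R^-1 : F) *: fps_pow g e j) lt_jN).
rewrite [RHS]big_mkcond /=; apply: eq_bigr => [[e he]] _ /=.
case: ifP => // /negbT; rewrite -leqNgt => le_ej.
by rewrite fps_pow_small ?scaler0.
Qed.

(* Differentiating exp g = sum_e g^e/e! termwise: z (exp g)' is the sum of
   the (z g') g^e/e!, since z (g^(e+1))' = (e + 1) (z g') g^e. *)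
Lemma fps_der_exp g k : g 0%N = 0 ->
  fps_der (fps_exp g) k =
  \sum_(e < k.+1) ((e`!)%:R^-1 : F) *: fps_mul (fps_der g) (fps_pow g e) k.
Proof.
move=> g0; have top_vanishes : fps_mul (fps_der g) (fps_pow g k) k = 0.
  rewrite /fps_mul big1 // => -[[|i] hi] _ /=; first by rewrite /fps_der !mul0r.
  by rewrite fps_pow_small ?mulr0 //; lia.
rewrite {1}/fps_der /fps_exp mulr_sumr big_ord_recl [RHS]big_ord_recr /=.
rewrite -scalerAr -/(fps_der (fps_one A) k) fps_der1 scaler0 add0r.
rewrite top_vanishes scaler0 addr0; apply: eq_bigr => i _.
rewrite -scalerAr -/(fps_der (fps_pow g i.+1) k) fps_der_pow.
rewrite /fps_scale mulr_natl -scaler_nat scalerA factS natrM invfM.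
by rewrite mulrAC mulVf ?mul1r // pnatr_eq0.
Qed.

Lemma solves_ode_exp g : g 0%N = 0 -> solves_ode (fps_exp g) (fps_der g).
Proof.
move=> g0; split; first by rewrite /fps_exp big_ord1 /= invr1 scale1r.
move=> k; rewrite fps_der_exp // /fps_mul; under eq_bigr => e _ do rewrite scaler_sumr.
rewrite exchange_big /=; apply: eq_bigr => -[i hi] _ /=.
rewrite -(@fps_exp_truncE g (k - i)%N k.+1) ?ltnS ?leq_subr // mulr_sumr.
by apply: eq_bigr => e _; rewrite scalerAr.
Qed.

Lemma solves_ode_unique G1 G2 h :
  h 0%N = 0 -> solves_ode G1 h -> solves_ode G2 h -> forall k, G1 k = G2 k.
Proof.
move=> h0 [G10 dG1] [G20 dG2] k; elim/ltn_ind: k => -[|k] IH; first by rewrite G10 G20.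
have natI (x y : A) : k.+1%:R * x = k.+1%:R * y -> x = y.
  rewrite !mulr_natl -!scaler_nat => /(congr1 ( *:%R (k.+1%:R : F)^-1)).
  by rewrite !scalerA mulVf ?scale1r // pnatr_eq0.
apply: natI; have := dG1 k.+1; have := dG2 k.+1; rewrite /fps_der => -> ->.
apply: eq_bigr => -[[|i] hi] _ /=; first by rewrite h0 !mul0r.
by rewrite IH // subSS ltnS leq_subr.
Qed.

End Exponential.

Fixpoint adj_eq (s : seq nat) : nat :=
  match s with
  | x :: ((y :: _) as s') => ((x == y) + adj_eq s')%N
  | _ => 0%N
  end.

Lemma adj_eqE (s : seq nat) :
  (\sum_(j < (size s).-1) (nth 0%N s j == nth 0%N s j.+1 : nat))%N = adj_eq s.
Proof.
elim: s => [|x [|y s] IH]; rewrite ?big_ord0 //.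
rewrite big_ord_recl /=; congr addn; rewrite -[RHS]IH.
by apply: eq_bigr => i _; rewrite add0n.
Qed.

Lemma big_tuple_cons (V : nmodType) (T : finType) k (P : pred (k.+1.-tuple T))
    (F : k.+1.-tuple T -> V) :
  \sum_(l | P l) F l =
  \sum_(x : T) \sum_(l : k.-tuple T | P [tuple of x :: l]) F [tuple of x :: l].
Proof.
rewrite pair_big_dep /=.
pose cons_tuple (p : T * k.-tuple T) : k.+1.-tuple T := [tuple of p.1 :: p.2].
rewrite (reindex cons_tuple) //.
exists (fun l : k.+1.-tuple T => (thead l, [tuple of behead l])) => [[x l] _|l _].
  by rewrite /cons_tuple /= theadE; congr pair; apply: val_inj.
by rewrite /cons_tuple /= -tuple_eta.
Qed.

Section FirstLetter.
Variables (R : realFieldType) (a : nat -> R) (n : nat).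
Local Notation T := 'I_n.

(* The summand of theta attached to a sequence of letters; the letter
   i : 'I_n stands for the value i + 1 in {1, ..., n}. *)
Definition seq_term (s : seq T) : {poly R} :=
  (\prod_(i <- s) a i.+1) *: 'X^(adj_eq (map val s)).

Lemma theta_seq_term k : theta a n k = \sum_(l : k.-tuple T | noninc l) seq_term l.
Proof.
apply: eq_bigr => l _; rewrite /seq_term /weight /sigma.
by rewrite -adj_eqE size_map size_tuple.
Qed.

Definition theta_from k (x : T) : {poly R} :=
  \sum_(l : k.-tuple T | noninc (x :: l)) seq_term (x :: l).

Lemma theta0 : theta a n 0 = 1.
Proof.
rewrite theta_seq_term (big_pred1 [tuple]) => [|l]; last by rewrite (tuple0 l) /= eqxx.
by rewrite /seq_term big_nil scale1r expr0.
Qed.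

Lemma thetaS k : theta a n k.+1 = \sum_(x : T) theta_from k x.
Proof. by rewrite theta_seq_term big_tuple_cons. Qed.

Lemma theta_from0 x : theta_from 0 x = a x.+1 *: 1.
Proof.
rewrite /theta_from (big_pred1 [tuple]) => [|l]; last by rewrite (tuple0 l) /= eqxx.
by rewrite /seq_term big_seq1 expr0.
Qed.

(* Removing the first letter x: the second letter y is either smaller than
   x, or equal to x and then contributes a factor t. *)
Lemma theta_fromS k x :
  theta_from k.+1 x =
  a x.+1 *: (\sum_(y : T | (y < x)%N) theta_from k y + 'X * theta_from k x).
Proof.
rewrite /theta_from big_tuple_cons.
have second_letter (y : T) :
    \sum_(l : k.-tuple T | noninc [:: x, y & l]) seq_term [:: x, y & l] =
    if (y <= x)%N then a x.+1 *: ('X^(x == y :> nat) * theta_from k y) else 0.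
  rewrite (eq_bigl (fun l : k.-tuple T => (y <= x)%N && noninc (y :: l))) //.
  case: (y <= x)%N; last by rewrite big_pred0.
  rewrite mulr_sumr scaler_sumr; apply: eq_bigr => l _.
  by rewrite /seq_term big_cons /= exprD -scalerA scalerAr.
rewrite (eq_bigr _ (fun y _ => second_letter y)) -big_mkcond /=.
rewrite (bigD1 x) //= eqxx expr1 addrC scalerDr; congr (_ + _).
rewrite scaler_sumr; apply: eq_big => [y|y /andP [_ ne_yx]].
  by rewrite ltn_neqAle andbC.
by rewrite (_ : (x == y :> nat) = false) ?expr0 ?mul1r // eq_sym; apply/negbTE.
Qed.

(* The factor P(c) = 1 + c z/(1 - c t z) = 1 + sum_(k >= 1) c^k t^(k-1) z^k. *)
Definition theta_factor (c : R) : fps {poly R} :=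
  fun k => if k == 0%N then 1 else c ^+ k *: 'X^(k.-1).

(* The generating function of the non-increasing sequences with all letters
   below v, i.e. with values in {1, ..., v}. *)
Definition theta_below (v : nat) : fps {poly R} :=
  fun k => if k is k'.+1 then \sum_(y : T | (y < v)%N) theta_from k' y else 1.

(* A sequence starting with v + 1 is a run of i + 1 copies of v + 1
   followed by a sequence with values at most v. *)
Lemma theta_fromE v (lt_vn : (v < n)%N) k :
  theta_from k (Ordinal lt_vn) =
  \sum_(i < k.+1) (a v.+1 ^+ i.+1 *: 'X^i) * theta_below v (k - i)%N.
Proof.
elim: k => [|k IH]; first by rewrite theta_from0 big_ord1 /= expr1 expr0 mulr1.
rewrite theta_fromS IH [RHS]big_ord_recl /= scalerDr expr1 expr0 -scalerAl mul1r.
congr (_ + _); rewrite mulr_sumr scaler_sumr; apply: eq_bigr => i _.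
rewrite /bump /= add1n subSS -!scalerAl -scalerAr scalerA -exprS.
by rewrite mulrA -exprS.
Qed.

Lemma theta_belowS v : (v < n)%N ->
  theta_below v.+1 = fps_mul (theta_factor (a v.+1)) (theta_below v).
Proof.
move=> lt_vn; apply: functional_extensionality => -[|k].
  by rewrite fps_mul_coef0 /theta_below /theta_factor /= mul1r.
rewrite /fps_mul big_ord_recl /= {1}/theta_factor /= mul1r.
rewrite (bigD1 (Ordinal lt_vn)) //= addrC; congr (_ + _).
  apply: eq_bigl => y; rewrite ltnS -val_eqE /=.
  by case: ltngtP.
rewrite (theta_fromE lt_vn); apply: eq_bigr => i _.
by rewrite /theta_factor /bump /= add1n subSS.
Qed.

Lemma theta_below_prod v : (v <= n)%N ->
  theta_below v = fps_prod [seq theta_factor (a m) | m <- iota 1 v].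
Proof.
elim: v => [|v IH] le_vn.
  by apply: functional_extensionality => -[|k] //; rewrite /theta_below /= big_pred0.
rewrite theta_belowS // IH; last exact: ltnW.
by rewrite -addn1 iotaD map_cat cats1 fps_prod_rcons add1n addn1.
Qed.

Lemma Theta_prod k : Theta a n k = fps_prod [seq theta_factor (a m) | m <- iota 1 n] k.
Proof.
rewrite -theta_below_prod // /Theta; case: k => [|k]; first exact: theta0.
by rewrite thetaS /theta_below; apply: eq_bigl => y; rewrite ltn_ord.
Qed.

End FirstLetter.

Lemma fps_inv_linE (B : comUnitRingType) (c0 c1 : B) k :
  fps_inv (fps_lin c0 c1) k = c0^-1 * (- c1 * c0^-1) ^+ k.
Proof.
rewrite /fps_inv; suff -> : fps_inv_seq (fps_lin c0 c1) k =
    mkseq (fun i => c0^-1 * (- c1 * c0^-1) ^+ i) k.+1 by rewrite nth_mkseq.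
elim: k => [|k IH]; first by rewrite /mkseq /= expr0 mulr1.
rewrite /= IH [in RHS]mkseqS; congr rcons.
rewrite big_ord_recl big1 ?addr0 /=; last by move=> i _; rewrite /fps_lin /= mul0r.
rewrite /fps_lin /= subn0 nth_mkseq // exprS; ring.
Qed.

Section ProductFormula.
Variable R : realFieldType.

Lemma theta_factorE (c : R) :
  fps_add (fps_one _) (fps_mul (fps_lin 0 c%:P) (fps_inv (fps_lin 1 (- (c *: 'X)))))
  = theta_factor c.
Proof.
apply: functional_extensionality => -[|k]; rewrite /fps_add /theta_factor.
  by rewrite fps_mul_coef0 /fps_lin /= mul0r addr0.
rewrite /fps_mul big_ord_recl big_ord_recl big1 /=; last first.
  by move=> i _; rewrite /fps_lin /= mul0r.
rewrite /fps_lin /= !fps_inv_linE invr1 !mulr1 opprK mul1r mul0r add0r addr0 subn1 /=.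
by rewrite exprZn mul_polyC add0r mul1r scalerA -exprS.
Qed.

Lemma theta_factor_geom (c : R) :
  theta_factor c = fps_mul (fps_geom (c *: 'X)) (fps_linear (c *: ('X - 1))).
Proof.
apply: functional_extensionality => -[|k].
  by rewrite fps_mul_coef0 /theta_factor /fps_linear /fps_lin /fps_geom /= mulr1.
rewrite fps_mul_linear /theta_factor /fps_geom /= !exprZn -!mul_polyC !rmorphXn /=.
rewrite !exprS; ring.
Qed.

Variable a : nat -> R.

Lemma Theta_product_formula n k :
  Theta a n k =
  fps_prod [seq fps_add (fps_one _)
              (fps_mul (fps_lin 0 (a m)%:P) (fps_inv (fps_lin 1 (- (a m *: 'X)))))
           | m <- iota 1 n] k.
Proof. by rewrite Theta_prod; congr (fps_prod _ k); apply: eq_map => m; rewrite theta_factorE. Qed.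

Definition theta_log n : fps {poly R} := fun j =>
  if j == 0%N then 0 else ((j%:R)^-1 * Apow a n j) *: ('X ^+ j - ('X - 1) ^+ j).

(* Its Euler derivative is the sum of the logarithmic derivatives of the
   factors: z (log P(c))' = c t z/(1 - c t z) - c (t - 1) z/(1 - c (t - 1) z). *)
Lemma theta_log_der n :
  fps_der (theta_log n) = fun j => \sum_(m <- iota 1 n)
    fps_add (fps_geom_tail (a m *: 'X)) (fun i => - fps_geom_tail (a m *: ('X - 1)) i) j.
Proof.
apply: functional_extensionality => -[|j].
  by rewrite /fps_der mul0r big1 // => m _; rewrite /fps_add /fps_geom_tail /= oppr0 addr0.
rewrite /fps_der /theta_log /fps_add /fps_geom_tail /=.
rewrite mulr_natl -scaler_nat scalerA mulrA mulfV ?pnatr_eq0 // mul1r.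
rewrite /Apow /index_iota subn1 scaler_suml; apply: eq_bigr => m _.
by rewrite !exprZn scalerBr.
Qed.

Lemma Theta_exp_formula n k : Theta a n k = fps_exp (theta_log n) k.
Proof.
rewrite Theta_prod; apply: (solves_ode_unique (F := R) (h := fps_der (theta_log n))).
- by rewrite /fps_der mul0r.
- rewrite theta_log_der; apply: solves_ode_prod => m; rewrite theta_factor_geom.
  exact: solves_odeM (solves_ode_geom _) (solves_ode_linear _).
- exact: solves_ode_exp.
Qed.

End ProductFormula.

Section EvaluationAndLinearProducts.
Variable B : comNzRingType.

Definition fps_eval (t : B) (f : fps {poly B}) : fps B := fun k => (f k).[t].

Lemma fps_evalM t (f g : fps {poly B}) :
  fps_eval t (fps_mul f g) = fps_mul (fps_eval t f) (fps_eval t g).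
Proof.
apply: functional_extensionality => k; rewrite /fps_eval /fps_mul horner_sum.
by apply: eq_bigr => i _; rewrite hornerM.
Qed.

Lemma fps_eval_prod t (I : Type) (s : seq I) (F : I -> fps {poly B}) :
  fps_eval t (fps_prod [seq F i | i <- s]) = fps_prod [seq fps_eval t (F i) | i <- s].
Proof.
elim: s => [|i s IH] /=; last by rewrite fps_evalM IH.
apply: functional_extensionality => k; rewrite /fps_eval /fps_one /fps_const.
by case: (k == 0%N); rewrite hornerC.
Qed.

Lemma horner_linear (u z : B) : (1 - u *: 'X).[z] = 1 - u * z.
Proof. by rewrite hornerD hornerN hornerZ hornerX hornerC. Qed.

Lemma prod_linear_top (I : Type) (s : seq I) (u : I -> B) :
  leq (size (\prod_(m <- s) (1 - u m *: 'X))) (size s).+1 /\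
  (\prod_(m <- s) (1 - u m *: 'X))`_(size s) = \prod_(m <- s) (- u m).
Proof.
elim: s => [|i s [IHsize IHtop]]; first by rewrite !big_nil size_poly1 coef1.
rewrite !big_cons; set P := \prod_(m <- s) _.
have coefLP j : ((1 - u i *: 'X) * P)`_j = P`_j - u i * (if j == 0%N then 0 else P`_j.-1).
  by rewrite mulrBl mul1r coefB -scalerAl coefZ coefXM.
have /leq_sizeP P_high := IHsize.
split; last by rewrite coefLP /= IHtop P_high // sub0r mulNr.
apply/leq_sizeP => -[|j] //= lt_sj; rewrite coefLP /= !P_high ?mulr0 ?subr0 //; lia.
Qed.

End EvaluationAndLinearProducts.

Section PartialFractions.
Variables (R : realFieldType) (a : nat -> R) (n : nat) (t : R).
Hypothesis t_neq0 : t != 0.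
Hypothesis a_neq0 : forall m, (1 <= m <= n)%N -> a m != 0.
Hypothesis a_inj :
  forall i j : nat, (1 <= i <= n)%N -> (1 <= j <= n)%N -> a i = a j -> i = j.

Local Notation r := (index_iota 1 n.+1).

Lemma mem_r j : (j \in r) = (1 <= j <= n)%N.
Proof. by rewrite mem_index_iota ltnS. Qed.

Lemma size_r : size r = n.
Proof. by rewrite size_iota subn1. Qed.

Definition pf_const : R := (t - 1) ^+ n / t ^+ n.
Definition pf_coef j : R := \prod_(1 <= m < n.+1) ((1 - t) / (a j * t) + (a m)^-1)
  / \prod_(1 <= l < n.+1 | l != j) ((a j)^-1 - (a l)^-1).
Definition pf_series : fps R := fps_add (fps_const pf_const) (fps_scale ((-1) ^+ n)
  (fun k => \sum_(1 <= j < n.+1) pf_coef j * fps_inv (fps_lin (- (a j)^-1) t) k)).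

(* Theta_n(z, t) = numer/denom, and the partial fraction decomposition times
   denom is pf_numer; denom_but j is denom without its j-th factor. *)
Definition denom : {poly R} := \prod_(m <- r) (1 - (a m * t) *: 'X).
Definition numer : {poly R} := \prod_(m <- r) (1 - (a m * (t - 1)) *: 'X).
Definition denom_but j : {poly R} := \prod_(m <- r | m != j) (1 - (a m * t) *: 'X).
Definition pf_numer : {poly R} :=
  pf_const *: denom + \sum_(j <- r) ((-1) ^+ n * pf_coef j * - a j) *: denom_but j.

Lemma Theta_eval k : (Theta a n k).[t] =
  fps_prod [seq fps_mul (fps_geom (a m * t)) (fps_linear (a m * (t - 1))) | m <- r] k.
Proof.
have iota_r : iota 1 n = r by rewrite /index_iota subn1.
rewrite Theta_prod iota_r -/(fps_eval t _ k) fps_eval_prod.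
congr (fps_prod _ k); apply: eq_map => m; rewrite theta_factor_geom fps_evalM.
congr fps_mul; apply: functional_extensionality => i; rewrite /fps_eval.
  by rewrite /fps_geom exprZn hornerZ hornerXn exprMn.
rewrite /fps_linear /fps_lin; case: i => [|[|i]] /=; rewrite ?hornerC //.
by rewrite hornerN hornerZ hornerD hornerN hornerX hornerC.
Qed.

Lemma Theta_eval_denom :
  fps_mul (fps_prod [seq fps_mul (fps_geom (a m * t)) (fps_linear (a m * (t - 1))) | m <- r])
          (fps_of_poly denom) = fps_of_poly numer.
Proof.
have linear_prod c : fps_of_poly (\prod_(m <- r) (1 - (a m * c) *: 'X)) =
    fps_prod [seq fps_linear (a m * c) | m <- r].
  by rewrite -fps_of_poly_prod; congr fps_prod; apply: eq_map => m; rewrite fps_linear_poly.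
rewrite /denom /numer !linear_prod -fps_prodM; congr fps_prod; apply: eq_map => m /=.
by rewrite -fps_mulA (fps_mulC (fps_linear _)) fps_mulA fps_geomK fps_mul1l.
Qed.

(* 1/(z t - 1/a_j) = - a_j/(1 - a_j t z), and multiplying it by denom gives
   - a_j denom_but j. *)
Lemma pf_term_denom j : j \in r ->
  fps_mul (fun k => fps_inv (fps_lin (- (a j)^-1) t) k) (fps_of_poly denom) =
  fps_scale (- a j) (fps_of_poly (denom_but j)).
Proof.
move=> jr; have aj_neq0 : a j != 0 by apply: a_neq0; rewrite -mem_r.
have -> : (fun k => fps_inv (fps_lin (- (a j)^-1) t) k) = fps_scale (- a j) (fps_geom (a j * t)).
  apply: functional_extensionality => k.
  by rewrite fps_inv_linE invrN invrK /fps_scale /fps_geom mulrNN (mulrC t).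
rewrite fps_mul_scalel /denom (bigD1_seq j) ?iota_uniq //= -fps_of_polyM.
by rewrite -fps_linear_poly fps_mulA fps_geomK fps_mul1l.
Qed.

Lemma pf_series_denom : fps_mul pf_series (fps_of_poly denom) = fps_of_poly pf_numer.
Proof.
rewrite /pf_series fps_mulDl fps_mul_constl fps_mul_scalel fps_mul_suml.
apply: functional_extensionality => k.
rewrite /fps_add /fps_scale /fps_of_poly /pf_numer coefD coefZ coef_sum; congr (_ + _).
rewrite mulr_sumr; apply: eq_big_seq => j jr.
by rewrite fps_mul_scalel pf_term_denom // /fps_scale /fps_of_poly coefZ !mulrA.
Qed.

Lemma a_neq0_r m : m \in r -> a m != 0.
Proof. by move=> mr; apply: a_neq0; rewrite -mem_r. Qed.

Lemma prod_r_scale (c : R) (F : nat -> R) :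
  \prod_(m <- r) (c * F m) = c ^+ n * \prod_(m <- r) F m.
Proof. by rewrite big_split /= prodr_const_nat subn1. Qed.

Lemma size_denom_but j : j \in r -> leq (size (denom_but j)) n.
Proof.
move=> jr; have [but_size _] := prod_linear_top (filter (predC1 j) r) (fun m => a m * t).
rewrite /denom_but -big_filter; apply: leq_trans but_size _.
have n_gt0 : (0 < n)%N by move: jr; rewrite mem_r; lia.
by rewrite -rem_filter ?iota_uniq // size_rem // size_r prednK.
Qed.

(* numer - pf_numer has degree < n: its coefficients of degree n cancel. *)
Lemma size_numer_sub : leq (size (numer - pf_numer)) n.
Proof.
have [numer_size numer_top] := prod_linear_top r (fun m => a m * (t - 1)).
have [denom_size denom_top] := prod_linear_top r (fun m => a m * t).
rewrite size_r in numer_size numer_top denom_size denom_top.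
have prodN c : \prod_(m <- r) (- (a m * c)) = (- c) ^+ n * \prod_(m <- r) a m.
  by rewrite -prod_r_scale; apply: eq_bigr => m _; rewrite mulNr mulrC.
apply/leq_sizeP => i le_ni; rewrite coefB /pf_numer coefD coefZ coef_sum.
rewrite big1_seq ?addr0 => [|j /andP [_ jr]]; last first.
  by rewrite coefZ (leq_sizeP _ _ (size_denom_but jr)) ?mulr0.
case: (eqVneq i n) => [->|ne_in].
  rewrite /numer /denom numer_top denom_top !prodN /pf_const (exprNn (t - 1)) (exprNn t).
  by apply/eqP; rewrite subr_eq0; apply/eqP; field; rewrite expf_neq0.
have lt_ni : (n < i)%N by rewrite ltn_neqAle eq_sym ne_in.
by rewrite /numer /denom !(leq_sizeP _ _ numer_size, leq_sizeP _ _ denom_size) // mulr0 subrr.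
Qed.

Definition pole j : R := (a j * t)^-1.

Lemma factor_pole_root j : j \in r -> (1 - (a j * t) *: 'X).[pole j] = 0.
Proof. by move=> jr; rewrite horner_linear mulfV ?subrr // mulf_neq0 ?a_neq0_r. Qed.

Lemma pf_numer_at_pole j : j \in r ->
  pf_numer.[pole j] = (-1) ^+ n * pf_coef j * - a j * (denom_but j).[pole j].
Proof.
move=> jr; have vanish (s : seq nat) : j \in s -> uniq s ->
    (\prod_(m <- s) (1 - (a m * t) *: 'X)).[pole j] = 0.
  by move=> js us; rewrite horner_prod (bigD1_seq j) //= factor_pole_root ?mul0r.
rewrite /pf_numer hornerD hornerZ vanish ?iota_uniq // mulr0 add0r horner_sum.
rewrite (bigD1_seq j) ?iota_uniq //= hornerZ big1_seq ?addr0 // => i /andP [ne_ij ir].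
rewrite hornerZ /denom_but -big_filter vanish ?mulr0 ?filter_uniq ?iota_uniq //.
by rewrite mem_filter jr eq_sym ne_ij.
Qed.

Lemma numer_at_pole j : j \in r ->
  numer.[pole j] = \prod_(m <- r) (a m * ((1 - t) / (a j * t) + (a m)^-1)).
Proof.
move=> jr; rewrite /numer horner_prod; apply: eq_big_seq => m mr.
have [am_neq0 aj_neq0] := (a_neq0_r mr, a_neq0_r jr).
by rewrite horner_linear /pole; field; rewrite ?am_neq0 ?aj_neq0 ?t_neq0.
Qed.

Lemma denom_but_at_pole j : j \in r ->
  (denom_but j).[pole j] = \prod_(m <- r | m != j) (- a m * ((a j)^-1 - (a m)^-1)).
Proof.
move=> jr; rewrite /denom_but horner_prod big_seq_cond [RHS]big_seq_cond.
apply: eq_bigr => m /andP [mr _]; have [am_neq0 aj_neq0] := (a_neq0_r mr, a_neq0_r jr).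
by rewrite horner_linear /pole; field; rewrite ?am_neq0 ?aj_neq0 ?t_neq0.
Qed.

Lemma pf_coef_denom_neq0 j : j \in r ->
  \prod_(m <- r | m != j) ((a j)^-1 - (a m)^-1) != 0.
Proof.
move=> jr; rewrite prodf_seq_neq0; apply/allP => m mr; apply/implyP => ne_mj.
rewrite subr_eq0; apply: contra ne_mj => /eqP /invr_inj eq_a.
by apply/eqP/esym; apply: a_inj eq_a; rewrite -mem_r.
Qed.

Lemma numer_sub_root j : j \in r -> (numer - pf_numer).[pole j] = 0.
Proof.
move=> jr; apply/eqP; rewrite hornerD hornerN subr_eq0; apply/eqP.
rewrite pf_numer_at_pole // numer_at_pole // denom_but_at_pole // /pf_coef !big_split /=.
have dist_neq0 := pf_coef_denom_neq0 jr.
set PA := \prod_(m <- r) a m; set PN := \prod_(m <- r | m != j) - a m.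
have signed_PA : PA = (-1) ^+ n * (- a j * PN).
  rewrite /PN -(bigD1_seq (F := fun m => - a m) j) ?iota_uniq //.
  rewrite (eq_bigr (fun m => -1 * a m)) => [|m _]; last by rewrite mulN1r.
  by rewrite prod_r_scale mulrA -exprMn mulrNN mulr1 expr1n mul1r.
by rewrite signed_PA; field.
Qed.

(* A nonzero polynomial of degree < n cannot vanish at the n distinct poles. *)
Lemma numer_eq : numer = pf_numer.
Proof.
apply/eqP; rewrite -subr_eq0; apply/negPn/negP => neq0.
have := max_poly_roots neq0 (rs := [seq pole j | j <- r]).
rewrite size_map size_r ltnNge size_numer_sub => many_roots.
suff : false by []; apply: many_roots.
- by apply/allP => _ /mapP [j jr ->]; rewrite /root numer_sub_root.
- rewrite map_inj_in_uniq ?iota_uniq // => i j ir jr /invr_inj /(mulIf t_neq0).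
  by apply: a_inj; rewrite -mem_r.
Qed.

(* The partial fraction formula, cancelling denom (whose constant term is 1). *)
Lemma Theta_partial_fractions k : (Theta a n k).[t] = pf_series k.
Proof.
rewrite Theta_eval; apply: (fps_mulIr (g := fps_of_poly denom)).
  rewrite /fps_of_poly -horner_coef0 /denom horner_prod big1 // => m _.
  by rewrite horner_linear mulr0 subr0.
by move=> i; rewrite Theta_eval_denom pf_series_denom numer_eq.
Qed.

End PartialFractions.

Unset Implicit Arguments.

Theorem mainTheorem1 (R : realFieldType) (a : nat -> R) (n : nat)
  (hn : (1 <= n)%N) (ha : forall m : nat, (1 <= m <= n)%N -> 0 < a m) :
  (* Part 1: identities of formal power series in z over {poly R} (t = 'X) *)
  (forall k : nat,
     Theta a n k =
     fps_prod [seq fps_add (fps_one _)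
                 (fps_mul (fps_lin 0 (a m)%:P)
                          (fps_inv (fps_lin 1 (- (a m *: 'X)))))
              | m <- iota 1 n] k)
  /\
  (forall k : nat,
     Theta a n k =
     fps_exp (fun j : nat =>
        if j == 0%N then 0
        else ((j%:R)^-1 * Apow a n j) *: ('X ^+ j - ('X - 1) ^+ j)) k)
  /\
  (* Part 2: for t <> 0 and pairwise distinct a_m, identity of rational
     functions in z, compared through their power series expansions at z = 0 *)
  (forall t : R, t != 0 ->
     (forall i j : nat, (1 <= i <= n)%N -> (1 <= j <= n)%N -> a i = a j -> i = j) ->
     forall k : nat,
       (Theta a n k).[t] =
       fps_add
         (fps_const ((t - 1) ^+ n / t ^+ n))
         (fps_scale ((-1) ^+ n)
            (fun k' => \sum_(1 <= j < n.+1)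
               (\prod_(1 <= m < n.+1) ((1 - t) / (a j * t) + (a m)^-1)
                / \prod_(1 <= l < n.+1 | l != j) ((a j)^-1 - (a l)^-1))
               * fps_inv (fps_lin (- (a j)^-1) t) k')) k).
Proof.
split; first exact: Theta_product_formula.
split; first exact: Theta_exp_formula.
move=> t t_neq0 a_inj k; apply: Theta_partial_fractions => // m m_range.
by rewrite lt0r_neq0 // ha.
Qed.
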